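(* Let $\alpha:\mathbb{C}\to\mathbb{C}$ be an exponential automorphism, i.e. a function satisfying $\alpha(z_1+z_2)=\alpha(z_1)+\alpha(z_2)$ and $\alpha(e^z)=e^{\alpha(z)}$ for all $z,z_1,z_2\in\mathbb{C}$. Let $r$ be a positive rational number, let $k$ be a positive integer, and let $r^{1/k}$ denote the positive real $k$th root of $r$. Then $\alpha(r^{1/k})=\zeta r^{1/k}$ for some $k$th root of unity $\zeta$. *)

From Stdlib Require Import Reals QArith Qreals.
From Coquelicot Require Import Coquelicot.
Open Scope R_scope.

Definition Cexp (z : C) : C :=
  (exp (Re z) * cos (Im z), exp (Re z) * sin (Im z)).

Definition exp_automorphism (alpha : C -> C) : Prop :=
  (forall z1 z2 : C, alpha (Cplus z1 z2) = Cplus (alpha z1) (alpha z2)) /\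
  (forall z : C, alpha (Cexp z) = Cexp (alpha z)).

Definition real_root (k : nat) (r : R) : R := Rpower r (/ INR k).

(* Write s for the positive k-th root of r.  Additivity makes alpha Q-linear, so
   together with alpha 1 = alpha (exp 0) = exp 0 = 1 it fixes every rational.
   Commuting with exp turns additivity into multiplicativity on the image of
   exp, which contains every positive real; hence alpha(s)^k = alpha(s^k) =
   alpha(r) = r = s^k, and zeta := alpha(s)/s is a k-th root of unity. *)
From Stdlib Require Import Reals QArith Qreals ZArith Lra Lia.
From Coquelicot Require Import Coquelicot.

Lemma Cexp_add (a b : C) : Cexp (a + b) = (Cexp a * Cexp b)%C.
Proof.
  destruct a as [a1 a2], b as [b1 b2]; unfold Cexp, Cplus, Cmult; simpl.
  rewrite exp_plus, cos_plus, sin_plus; f_equal; ring.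
Qed.

Lemma Cexp_RtoC (x : R) : Cexp (RtoC x) = RtoC (exp x).
Proof. unfold Cexp, RtoC; simpl; rewrite cos_0, sin_0; f_equal; ring. Qed.

Lemma Cexp_ln (x : R) : 0 < x -> Cexp (RtoC (ln x)) = RtoC x.
Proof. intros Hx; rewrite Cexp_RtoC, exp_ln by exact Hx; reflexivity. Qed.

Lemma Cpow_Cexp (z : C) (n : nat) : Cpow (Cexp z) n = Cexp (INR n * z).
Proof.
  induction n as [|n IH].
  - change (INR 0) with 0.
    replace (0 * z)%C with (RtoC 0) by ring.
    now rewrite Cexp_RtoC, exp_0.
  - rewrite Cpow_S, IH, <- Cexp_add, S_INR, RtoC_plus; f_equal; ring.
Qed.

Lemma RtoC_neq_0 (x : R) : x <> 0 -> RtoC x <> 0%C.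
Proof. intros Hx E; apply Hx; now injection E. Qed.

Lemma Cpow_div_RtoC_eq_1 (w : C) (s : R) (n : nat) :
  s <> 0 -> Cpow w n = RtoC (s ^ n) -> Cpow (w / s) n = 1%C.
Proof.
  intros Hs Hw; unfold Cdiv.
  rewrite Cpow_mult_l, Cpow_inv, Hw, RtoC_pow by now apply RtoC_neq_0.
  apply Cinv_r, Cpow_nz, RtoC_neq_0, Hs.
Qed.

Lemma real_root_pos (k : nat) (r : R) : 0 < real_root k r.
Proof. apply exp_pos. Qed.

Lemma real_root_pow (k : nat) (r : R) :
  (0 < k)%nat -> 0 < r -> real_root k r ^ k = r.
Proof.
  intros Hk Hr; unfold real_root.
  assert (Hk' : INR k <> 0) by (apply not_0_INR; lia).
  rewrite <- Rpower_pow, Rpower_mult by apply exp_pos.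
  replace (/ INR k * INR k) with 1 by (field; exact Hk').
  apply Rpower_1, Hr.
Qed.

Section Additive.

Variable f : C -> C.
Hypothesis f_add : forall z1 z2 : C, f (z1 + z2) = (f z1 + f z2)%C.

Lemma additive_0 : f 0%C = 0%C.
Proof.
  assert (H := f_add 0%C 0%C).
  rewrite Cplus_0_l in H.
  replace (f 0%C) with (f 0%C + f 0%C - f 0%C)%C by ring.
  rewrite <- H; ring.
Qed.

Lemma additive_scale_nat (n : nat) (z : C) : f (INR n * z) = (INR n * f z)%C.
Proof.
  induction n as [|n IH].
  - change (INR 0) with 0.
    replace (0 * z)%C with (RtoC 0) by ring.
    rewrite additive_0; ring.
  - rewrite S_INR, RtoC_plus, Cmult_plus_distr_r, f_add, IH, !Cmult_1_l.
    ring.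
Qed.

Lemma additive_opp (z : C) : f (- z) = (- f z)%C.
Proof.
  assert (H := f_add z (- z)).
  rewrite Cplus_opp_r, additive_0 in H.
  replace (f (- z)) with (f z + f (- z) - f z)%C by ring.
  rewrite <- H; ring.
Qed.

Lemma additive_scale_Z (m : Z) (z : C) : f (IZR m * z) = (IZR m * f z)%C.
Proof.
  destruct m as [|p|p].
  - replace (IZR 0 * z)%C with (RtoC 0) by ring.
    rewrite additive_0; ring.
  - rewrite <- positive_nat_Z, <- INR_IZR_INZ; apply additive_scale_nat.
  - rewrite <- Pos2Z.opp_pos, opp_IZR, <- positive_nat_Z, <- INR_IZR_INZ.
    rewrite RtoC_opp.
    replace (- INR (Pos.to_nat p) * z)%C with (- (INR (Pos.to_nat p) * z))%C
      by ring.
    rewrite additive_opp, additive_scale_nat; ring.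
Qed.

Lemma additive_fixes_Q : f 1%C = 1%C -> forall q : Q, f (Q2R q) = RtoC (Q2R q).
Proof.
  intros f1 [n d]; unfold Q2R; simpl.
  assert (Hd : IZR (Z.pos d) <> 0) by (apply eq_IZR_contrapositive; lia).
  assert (Hd' := RtoC_neq_0 _ Hd).
  assert (Hscaled :
    (IZR (Z.pos d) * f (IZR n * / IZR (Z.pos d))%R)%C = RtoC (IZR n)).
  { rewrite <- additive_scale_Z.
    replace (IZR (Z.pos d) * (IZR n * / IZR (Z.pos d))%R)%C with (IZR n * 1)%C
      by (rewrite RtoC_mult, RtoC_inv by exact Hd; field; exact Hd').
    rewrite additive_scale_Z, f1; ring. }
  replace (f (IZR n * / IZR (Z.pos d))%R) with
    (/ IZR (Z.pos d) * (IZR (Z.pos d) * f (IZR n * / IZR (Z.pos d))%R))%C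
    by (field; exact Hd').
  rewrite Hscaled, RtoC_mult, RtoC_inv by exact Hd.
  ring.
Qed.

End Additive.

Section ExpAutomorphism.

Variable alpha : C -> C.
Hypothesis Halpha : exp_automorphism alpha.

Lemma exp_automorphism_1 : alpha 1%C = 1%C.
Proof.
  destruct Halpha as [Hadd Hexp].
  rewrite <- exp_0, <- Cexp_RtoC, Hexp, (additive_0 alpha Hadd).
  now rewrite Cexp_RtoC, exp_0.
Qed.

Lemma exp_automorphism_fixes_Q (q : Q) : alpha (Q2R q) = RtoC (Q2R q).
Proof.
  apply additive_fixes_Q; [apply Halpha | apply exp_automorphism_1].
Qed.

Lemma exp_automorphism_Cpow_Cexp (z : C) (n : nat) :
  alpha (Cpow (Cexp z) n) = Cpow (alpha (Cexp z)) n.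
Proof.
  destruct Halpha as [Hadd Hexp].
  rewrite Cpow_Cexp, Hexp, (additive_scale_nat alpha Hadd), Hexp.
  symmetry; apply Cpow_Cexp.
Qed.

Lemma exp_automorphism_pow_pos (x : R) (n : nat) :
  0 < x -> alpha (RtoC (x ^ n)) = Cpow (alpha (RtoC x)) n.
Proof.
  intros Hx; rewrite RtoC_pow, <- (Cexp_ln x Hx).
  apply exp_automorphism_Cpow_Cexp.
Qed.

End ExpAutomorphism.

Theorem mainTheorem4 (alpha : C -> C) (Halpha : exp_automorphism alpha)
  (r : Q) (hr : (0 < r)%Q) (k : nat) (hk : (0 < k)%nat) :
  exists zeta : C, Cpow zeta k = RtoC 1 /\
    alpha (RtoC (real_root k (Q2R r))) = Cmult zeta (RtoC (real_root k (Q2R r))).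
Proof.
  set (s := real_root k (Q2R r)).
  assert (Hr : 0 < Q2R r) by (rewrite <- RMicromega.Q2R_0; now apply Qlt_Rlt).
  assert (Hs : 0 < s) by apply real_root_pos.
  assert (Hsk : s ^ k = Q2R r) by now apply real_root_pow.
  assert (Hpow : Cpow (alpha s) k = RtoC (s ^ k)).
  { rewrite <- exp_automorphism_pow_pos, Hsk by assumption.
    apply exp_automorphism_fixes_Q, Halpha. }
  exists (alpha s / s)%C; split.
  - apply Cpow_div_RtoC_eq_1; [lra | exact Hpow].
  - field; apply RtoC_neq_0; lra.
Qed.
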